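(* Let $M(C,\bar\xi,\pi)$ be a Myller configuration with Darboux frame $(\bar\xi,\bar\mu,\bar v)$ and invariants $G,K,T$, with $(G,T)\neq(0,0)$ everywhere. Then: (i) if $K\equiv0$, $C$ is a $\bar\mu$-helix iff $\sigma_\mu=\mp\dfrac{T'G-TG'}{(G^2+T^2)^{3/2}}$ is constant; (ii) if $G\equiv0$, $C$ is a $\bar\mu$-helix iff $\sigma_\mu=\pm K/T$ is constant; (iii) if $T\equiv0$, $C$ is a $\bar\mu$-helix iff $\sigma_\mu=\pm K/G$ is constant.
   Context: Let $C$ be a smooth curve in $E^3$ parametrized by arclength $s$; primes denote $d/ds$. A Myller configuration $M(C,\bar\xi,\pi)$ consists of a smooth unit vector field $\bar\xi$ along $C$ and a smooth oriented plane field $\pi$ with $\bar\xi\in\pi$; $\bar v$ is the unit normal of $\pi$, $\bar\mu=\bar v\times\bar\xi$, and $\bar\xi'=G\bar\mu+K\bar v$, $\bar\mu'=-G\bar\xi+T\bar v$, $\bar v'=-K\bar\xi-T\bar\mu$. $C$ is a $\bar\mu$-helix if $\langle\bar\mu,\bar d_\mu\rangle$ is constant along $C$ for some constant unit vector $\bar d_\mu$. *)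

From Stdlib Require Import Reals.
From Coquelicot Require Import Coquelicot.
Open Scope R_scope.

Record vec := Vec { vx : R ; vy : R ; vz : R }.

Definition dot (u w : vec) : R := vx u * vx w + vy u * vy w + vz u * vz w.

Definition cross (u w : vec) : vec :=
  Vec (vy u * vz w - vz u * vy w)
      (vz u * vx w - vx u * vz w)
      (vx u * vy w - vy u * vx w).

Definition vlin (a : R) (u : vec) (b : R) (w : vec) : vec :=
  Vec (a * vx u + b * vx w) (a * vy u + b * vy w) (a * vz u + b * vz w).

Definition inI (a b s : R) : Prop := a < s < b.

Definition smooth_on (a b : R) (f : R -> R) : Prop :=
  forall (n : nat) (s : R), inI a b s -> ex_derive_n f n s.

Definition vsmooth_on (a b : R) (F : R -> vec) : Prop :=
  smooth_on a b (fun s => vx (F s)) /\ smooth_on a b (fun s => vy (F s)) /\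
  smooth_on a b (fun s => vz (F s)).

Definition vderiv (F : R -> vec) (s : R) (D : vec) : Prop :=
  is_derive (fun t => vx (F t)) s (vx D) /\
  is_derive (fun t => vy (F t)) s (vy D) /\
  is_derive (fun t => vz (F t)) s (vz D).

Definition vDerive (F : R -> vec) (s : R) : vec :=
  Vec (Derive (fun t => vx (F t)) s) (Derive (fun t => vy (F t)) s)
      (Derive (fun t => vz (F t)) s).

(* Myller configuration M(C, xi, pi) on (a,b) with Darboux frame (xi, mu, v)
   (v = unit normal of the oriented plane field pi, mu = v x xi) and
   invariants G, K, T. *)
Definition myller_config (a b : R) (C xi mu v : R -> vec) (G K T : R -> R) : Prop :=
  vsmooth_on a b C /\ vsmooth_on a b xi /\ vsmooth_on a b mu /\ vsmooth_on a b v /\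
  smooth_on a b G /\ smooth_on a b K /\ smooth_on a b T /\
  (forall s, inI a b s ->
     dot (vDerive C s) (vDerive C s) = 1 /\          (* arclength parameter *)
     dot (xi s) (xi s) = 1 /\ dot (v s) (v s) = 1 /\ dot (xi s) (v s) = 0 /\
     mu s = cross (v s) (xi s) /\
     vderiv xi s (vlin (G s) (mu s) (K s) (v s)) /\
     vderiv mu s (vlin (- G s) (xi s) (T s) (v s)) /\
     vderiv v s (vlin (- K s) (xi s) (- T s) (mu s))).

Definition mu_helix (a b : R) (mu : R -> vec) : Prop :=
  exists d : vec, dot d d = 1 /\
    exists c : R, forall s, inI a b s -> dot (mu s) d = c.

Definition const_on (a b : R) (f : R -> R) : Prop :=
  exists k : R, forall s, inI a b s -> f s = k.

From Stdlib Require Import Reals Lra.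
From Coquelicot Require Import Coquelicot.
Open Scope R_scope.

(** For a constant vector d, the coordinates X = <xi,d>, Y = <mu,d>, V = <v,d>
    satisfy X' = G Y + K V, Y' = - G X + T V, V' = - K X - T Y, so C is a
    mu-helix exactly when this system has a nonzero solution with Y = c
    constant, i.e. G X = T V, X' = G c + K V, V' = - K X - T c.  If G = 0 then
    V = 0 and X is constant, so the last equation makes K/T constant; T = 0 is
    the same case with xi and v exchanged.  If K = 0, (X, V) is a constant
    multiple of the unit vector (T, G)/sqrt(G^2 + T^2), whose derivative is
    sigma_mu (G, -T); comparing with (X', V') = c (G, -T) shows that sigma_mu
    is constant, and conversely. *)

Lemma dotC u w : dot u w = dot w u.
Proof. unfold dot; ring. Qed.

Lemma dot_vlin p u q w d : dot (vlin p u q w) d = p * dot u d + q * dot w d.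
Proof. destruct u, w, d; unfold dot, vlin; simpl; ring. Qed.

Lemma dot_crossl w x : dot (cross w x) w = 0.
Proof. destruct w, x; unfold dot, cross; simpl; ring. Qed.

Lemma dot_crossr w x : dot (cross w x) x = 0.
Proof. destruct w, x; unfold dot, cross; simpl; ring. Qed.

Lemma dot_cross_cross w x : dot (cross w x) (cross w x) = dot w w * dot x x - dot w x ^ 2.
Proof. destruct w, x; unfold dot, cross; simpl; ring. Qed.

(* The Gram determinant of (d, w, x). *)
Lemma triple_product_sqr d w x :
  dot d (cross w x) ^ 2 =
  dot d d * dot w w * dot x x + 2 * dot d w * dot w x * dot x d
  - dot d d * dot w x ^ 2 - dot w w * dot d x ^ 2 - dot x x * dot d w ^ 2.
Proof. destruct d, w, x; unfold dot, cross; simpl; ring. Qed.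

Definition vcomb3 (p : R) (x : vec) (q : R) (y : vec) (r : R) (z : vec) : vec :=
  Vec (p * vx x + q * vx y + r * vx z) (p * vy x + q * vy y + r * vy z)
      (p * vz x + q * vz y + r * vz z).

Lemma dot_vcomb3 p x q y r z d :
  dot (vcomb3 p x q y r z) d = p * dot x d + q * dot y d + r * dot z d.
Proof. destruct x, y, z, d; unfold dot, vcomb3; simpl; ring. Qed.

Lemma vec_eq_dot u w : (forall d, dot u d = dot w d) -> u = w.
Proof.
  intros H. destruct u as [x1 y1 z1], w as [x2 y2 z2].
  pose proof (H (Vec 1 0 0)); pose proof (H (Vec 0 1 0)); pose proof (H (Vec 0 0 1)).
  unfold dot in *; simpl in *. f_equal; lra.
Qed.

Lemma is_derive_Rmult f g x df dg :
  is_derive f x df -> is_derive g x dg ->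
  is_derive (fun t => f t * g t) x (df * g x + f x * dg).
Proof. intros Hf Hg. apply (is_derive_mult f g); auto. intros; apply Rmult_comm. Qed.

Lemma is_derive_Rplus f g x df dg :
  is_derive f x df -> is_derive g x dg -> is_derive (fun t => f t + g t) x (df + dg).
Proof. intros Hf Hg. apply (is_derive_plus f g); auto. Qed.

Lemma is_derive_eq_val (f : R -> R) (x l l' : R) : l = l' -> is_derive f x l -> is_derive f x l'.
Proof. now intros ->. Qed.

Lemma is_derive_Rconst (k x : R) : is_derive (fun _ => k) x 0.
Proof. exact (is_derive_const (K:=R_AbsRing) k x). Qed.

Lemma locally_inI a b s : inI a b s -> locally s (inI a b).
Proof. exact (open_and _ _ (open_gt a) (open_lt b) s). Qed.

Lemma is_derive_unique_on a b (f g : R -> R) s l l' :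
  (forall t, inI a b t -> f t = g t) -> inI a b s ->
  is_derive f s l -> is_derive g s l' -> l = l'.
Proof.
  intros Hfg Hs Hf Hg.
  rewrite <- (is_derive_unique g s l'), <- (is_derive_unique g s l); auto.
  apply (is_derive_ext_loc f); [|exact Hf].
  exact (filter_imp _ _ Hfg (locally_inI a b s Hs)).
Qed.

Lemma eq_on_of_is_derive0 a b (f : R -> R) :
  (forall s, inI a b s -> is_derive f s 0) ->
  forall s t, inI a b s -> inI a b t -> f s = f t.
Proof.
  intros H s t Hs Ht.
  assert (Hin : forall x, Rmin s t <= x <= Rmax s t -> inI a b x).
  { unfold inI, Rmin, Rmax in *. intros x Hx. destruct Rle_dec; lra. }
  destruct (MVT_gen f s t (fun _ => 0)) as [c [_ Hc]]; [| |lra].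
  - intros x Hx. apply H, Hin. lra.
  - intros x Hx. apply continuity_pt_filterlim, (ex_derive_continuous f).
    exists 0. apply H, Hin, Hx.
Qed.

Lemma vderiv_dot_const F s D d :
  vderiv F s D -> is_derive (fun t => dot (F t) d) s (dot D d).
Proof.
  intros (Dx & Dy & Dz). rewrite dotC.
  apply (is_derive_ext (fun t => dot d (F t))); [intros; apply dotC|]. unfold dot.
  apply is_derive_Rplus; [apply is_derive_Rplus|]; apply is_derive_scal; assumption.
Qed.

Lemma mu_helix_of_dot_const a b (mu : R -> vec) D c :
  0 < dot D D -> (forall s, inI a b s -> dot (mu s) D = c) -> mu_helix a b mu.
Proof.
  intros HD Hc. set (r := sqrt (dot D D)).
  assert (Hr : 0 < r) by (apply sqrt_lt_R0; exact HD).
  assert (Hrr : r * r = dot D D) by (apply sqrt_sqrt; lra).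
  exists (Vec (vx D / r) (vy D / r) (vz D / r)). split.
  - transitivity (dot D D / (r * r)); [unfold dot; simpl; field; lra|].
    rewrite Hrr. field. lra.
  - exists (c / r). intros s Hs. rewrite <- (Hc s Hs). unfold dot; simpl. field. lra.
Qed.

(* (X, c, V) stand for the coordinates <xi,d>, <mu,d>, <v,d> of a vector d
   with <mu,d> = c constant; the equations say that d is constant. *)
Definition axis_system (a b : R) (G K T X V : R -> R) (c : R) : Prop :=
  forall s, inI a b s ->
    G s * X s = T s * V s /\
    is_derive X s (G s * c + K s * V s) /\
    is_derive V s (- K s * X s - T s * c).

Definition axis_coords (a b : R) (G K T X V : R -> R) (c : R) : Prop :=
  (exists s0, inI a b s0 /\ 0 < X s0 ^ 2 + c ^ 2 + V s0 ^ 2) /\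
  axis_system a b G K T X V c.

Section DarbouxFrame.
Variables (a b : R) (C xi mu v : R -> vec) (G K T : R -> R).
Hypothesis HM : myller_config a b C xi mu v G K T.

Lemma myller_GT_derivable s : inI a b s -> ex_derive G s /\ ex_derive T s.
Proof.
  destruct HM as (_ & _ & _ & _ & HG & _ & HT & _). intros Hs.
  exact (conj (HG 1%nat s Hs) (HT 1%nat s Hs)).
Qed.

Lemma frame_orthonormal s : inI a b s ->
  dot (xi s) (xi s) = 1 /\ dot (mu s) (mu s) = 1 /\ dot (v s) (v s) = 1 /\
  dot (xi s) (mu s) = 0 /\ dot (xi s) (v s) = 0 /\ dot (mu s) (v s) = 0.
Proof.
  intros Hs. destruct HM as (_ & _ & _ & _ & _ & _ & _ & H).
  destruct (H s Hs) as (_ & Hx & Hv & Hxv & Hmu & _). rewrite Hmu.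
  repeat split; auto.
  - rewrite dot_cross_cross, Hx, Hv, dotC, Hxv. ring.
  - rewrite dotC. apply dot_crossr.
  - apply dot_crossl.
Qed.

Lemma frame_parseval s d : inI a b s ->
  dot d d = dot (xi s) d ^ 2 + dot (mu s) d ^ 2 + dot (v s) d ^ 2.
Proof.
  intros Hs. destruct HM as (_ & _ & _ & _ & _ & _ & _ & H).
  destruct (H s Hs) as (_ & Hx & Hv & Hxv & Hmu & _). rewrite Hmu.
  rewrite (dotC (cross _ _) d), triple_product_sqr, Hx, Hv, (dotC (v s) (xi s)), Hxv.
  rewrite (dotC (xi s) d), (dotC (v s) d). ring.
Qed.

Lemma frame_coord_derive s d : inI a b s ->
  is_derive (fun t => dot (xi t) d) s (G s * dot (mu s) d + K s * dot (v s) d) /\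
  is_derive (fun t => dot (mu t) d) s (- G s * dot (xi s) d + T s * dot (v s) d) /\
  is_derive (fun t => dot (v t) d) s (- K s * dot (xi s) d - T s * dot (mu s) d).
Proof.
  intros Hs. destruct HM as (_ & _ & _ & _ & _ & _ & _ & H).
  destruct (H s Hs) as (_ & _ & _ & _ & _ & Dxi & Dmu & Dv).
  apply (vderiv_dot_const _ _ _ d) in Dxi, Dmu, Dv. rewrite dot_vlin in Dxi, Dmu, Dv.
  split; [exact Dxi|split; [exact Dmu|]]. revert Dv. apply is_derive_eq_val. ring.
Qed.

Lemma frame_comb_const X V c :
  axis_system a b G K T X V c ->
  forall s t, inI a b s -> inI a b t ->
    vcomb3 (X s) (xi s) c (mu s) (V s) (v s) = vcomb3 (X t) (xi t) c (mu t) (V t) (v t).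
Proof.
  intros H s t Hs Ht. apply vec_eq_dot. intros d. rewrite !dot_vcomb3.
  revert s t Hs Ht.
  apply (eq_on_of_is_derive0 a b
    (fun t => X t * dot (xi t) d + c * dot (mu t) d + V t * dot (v t) d)).
  intros s Hs. destruct (H s Hs) as (E & DX & DV).
  destruct (frame_coord_derive s d Hs) as (Dxi & Dmu & Dv).
  pose proof (is_derive_Rplus _ _ _ _ _
    (is_derive_Rplus _ _ _ _ _ (is_derive_Rmult _ _ _ _ _ DX Dxi) (is_derive_scal _ _ c _ Dmu))
    (is_derive_Rmult _ _ _ _ _ DV Dv)) as D.
  revert D. apply is_derive_eq_val.
  transitivity ((G s * X s - T s * V s) * dot (mu s) d); [ring|]. rewrite E. ring.
Qed.

Lemma mu_helix_iff_axis_coords : a < b ->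
  (mu_helix a b mu <-> exists X V c, axis_coords a b G K T X V c).
Proof.
  intros Hab. set (s0 := (a + b) / 2).
  assert (Hs0 : inI a b s0) by (unfold inI, s0; lra).
  split.
  - intros (d & Hd & c & Hc).
    exists (fun t => dot (xi t) d), (fun t => dot (v t) d), c. split.
    + exists s0. split; [exact Hs0|]. pose proof (frame_parseval s0 d Hs0) as P.
      rewrite (Hc s0 Hs0) in P. cbv beta. lra.
    + intros s Hs. destruct (frame_coord_derive s d Hs) as (Dxi & Dmu & Dv).
      rewrite (Hc s Hs) in Dxi, Dv. split; [|split; assumption].
      assert (Hmu' := is_derive_unique_on a b _ (fun _ => c) s _ 0 Hc Hs Dmu
                        (is_derive_Rconst c s)).
      lra.
  - intros (X & V & c & (t0 & Ht0 & Hn) & H).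
    set (D := vcomb3 (X t0) (xi t0) c (mu t0) (V t0) (v t0)).
    destruct (frame_orthonormal t0 Ht0) as (N1 & N2 & N3 & O1 & O2 & O3).
    apply (mu_helix_of_dot_const a b mu D c).
    + unfold D. rewrite dot_vcomb3, !(dotC _ (vcomb3 _ _ _ _ _ _)), !dot_vcomb3.
      rewrite (dotC (mu t0) (xi t0)), (dotC (v t0) (xi t0)), (dotC (v t0) (mu t0)).
      rewrite N1, N2, N3, O1, O2, O3. lra.
    + intros s Hs. unfold D. rewrite (frame_comb_const X V c H t0 s Ht0 Hs).
      destruct (frame_orthonormal s Hs) as (_ & M2 & _ & M4 & _ & M6).
      rewrite dotC, dot_vcomb3, (dotC (v s)), M4, M2, M6. ring.
Qed.

End DarbouxFrame.

(* Exchanging the roles of xi and v. *)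
Lemma axis_coords_swap a b G K T X V c :
  axis_coords a b G K T X V c <->
  axis_coords a b (fun s => - T s) (fun s => - K s) (fun s => - G s) V X c.
Proof.
  unfold axis_coords, axis_system.
  split; intros ((s0 & Hs0 & Hn) & H); (split; [exists s0; split; [exact Hs0|lra]|]);
    intros s Hs; destruct (H s Hs) as (E & DX & DV);
    (split; [lra|split]); [revert DV|revert DX|revert DV|revert DX];
    apply is_derive_eq_val; ring.
Qed.

Lemma axis_coords_G0 a b G K T : a < b ->
  (forall s, inI a b s -> G s = 0) -> (forall s, inI a b s -> T s <> 0) ->
  ((exists X V c, axis_coords a b G K T X V c) <-> const_on a b (fun s => K s / T s)).
Proof.
  intros Hab HG0 HT. split.
  - intros (X & V & c & (s0 & Hs0 & Hn) & H).
    assert (HV : forall s, inI a b s -> V s = 0).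
    { intros s Hs. destruct (H s Hs) as (E & _). rewrite HG0 in E by exact Hs.
      apply (Rmult_eq_reg_l (T s)); [lra|exact (HT s Hs)]. }
    assert (HX : forall s, inI a b s -> X s = X s0).
    { intros s Hs. apply (eq_on_of_is_derive0 a b X); [|exact Hs|exact Hs0].
      intros t Ht. destruct (H t Ht) as (_ & DX & _). revert DX.
      apply is_derive_eq_val. rewrite HG0, HV by exact Ht. ring. }
    assert (HK : forall s, inI a b s -> K s * X s0 = - T s * c).
    { intros s Hs. destruct (H s Hs) as (_ & _ & DV).
      assert (E := is_derive_unique_on a b V (fun _ => 0) s _ 0 HV Hs DV
                     (is_derive_Rconst 0 s)).
      rewrite HX in E by exact Hs. lra. }
    assert (HX0 : X s0 <> 0).
    { intros E. assert (Hc : c = 0).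
      { apply (Rmult_eq_reg_l (T s0)); [|exact (HT s0 Hs0)].
        pose proof (HK s0 Hs0). rewrite E in *. lra. }
      rewrite E, Hc, (HV s0 Hs0) in Hn. lra. }
    exists (- c / X s0). intros s Hs. pose proof (HT s Hs). pose proof (HK s Hs).
    field_simplify_eq; [|split; assumption]. lra.
  - intros (k & Hk). exists (fun _ => 1), (fun _ => 0), (- k). split.
    + exists ((a + b) / 2). split; [unfold inI; lra | nra].
    + intros s Hs. assert (HKs : K s = k * T s).
      { rewrite <- (Hk s Hs). field. exact (HT s Hs). }
      rewrite HG0, HKs by exact Hs.
      split; [ring|split]; apply (is_derive_eq_val _ _ 0);
        try ring; apply is_derive_Rconst.
Qed.

Lemma axis_coords_T0 a b G K T : a < b ->
  (forall s, inI a b s -> T s = 0) -> (forall s, inI a b s -> G s <> 0) ->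
  ((exists X V c, axis_coords a b G K T X V c) <-> const_on a b (fun s => K s / G s)).
Proof.
  intros Hab HT0 HG.
  assert (Hratio : forall s, inI a b s -> - K s / - G s = K s / G s).
  { intros s Hs. field. exact (HG s Hs). }
  transitivity (exists X V c,
    axis_coords a b (fun s => - T s) (fun s => - K s) (fun s => - G s) X V c).
  { split; intros (X & V & c & H); exists V, X, c.
    - exact (proj1 (axis_coords_swap _ _ _ _ _ _ _ _) H).
    - exact (proj2 (axis_coords_swap _ _ _ _ _ _ _ _) H). }
  rewrite axis_coords_G0; [|exact Hab| |].
  - split; intros (k & Hk); exists k; intros s Hs; rewrite <- (Hk s Hs);
      [symmetry|]; apply Hratio; exact Hs.
  - intros s Hs. rewrite (HT0 s Hs). ring.
  - intros s Hs. apply Ropp_neq_0_compat, HG, Hs.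
Qed.

Lemma Rpower_3_2 q : 0 < q -> Rpower q (3 / 2) = q * sqrt q.
Proof.
  intros Hq. replace (3 / 2) with (1 + / 2) by field.
  rewrite Rpower_plus, Rpower_1, Rpower_sqrt; auto.
Qed.

Section NormalizedPair.
Variables (a b : R) (G T : R -> R).
Hypothesis GT_derivable : forall s, inI a b s -> ex_derive G s /\ ex_derive T s.
Hypothesis GT_neq0 : forall s, inI a b s -> G s <> 0 \/ T s <> 0.

Let w s := sqrt (G s ^ 2 + T s ^ 2).
Let u s := T s / w s.
Let z s := G s / w s.
Let sigma s := (Derive T s * G s - T s * Derive G s) / Rpower (G s ^ 2 + T s ^ 2) (3 / 2).

Lemma GT_norm_pos s : inI a b s -> 0 < G s ^ 2 + T s ^ 2.
Proof.
  intros Hs. pose proof (pow2_ge_0 (G s)). pose proof (pow2_ge_0 (T s)).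
  destruct (GT_neq0 s Hs) as [Hne|Hne]; pose proof (pow2_gt_0 _ Hne); lra.
Qed.

Lemma GT_norm_sqr s : inI a b s -> 0 < w s /\ w s * w s = G s ^ 2 + T s ^ 2.
Proof.
  intros Hs. pose proof (GT_norm_pos s Hs).
  split; [apply sqrt_lt_R0 | apply sqrt_sqrt; lra]; assumption.
Qed.

Lemma normalized_pair_unit s : inI a b s -> u s ^ 2 + z s ^ 2 = 1.
Proof.
  intros Hs. destruct (GT_norm_sqr s Hs) as [Hw%Rgt_not_eq Hww]. unfold u, z.
  field_simplify_eq; [|exact Hw]. lra.
Qed.

Lemma normalized_pair_cross s : inI a b s -> G s * u s = T s * z s.
Proof. intros Hs. unfold u, z, Rdiv. ring. Qed.

Lemma normalized_pair_derive s : inI a b s ->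
  is_derive u s (G s * sigma s) /\ is_derive z s (- T s * sigma s).
Proof.
  intros Hs. destruct (GT_derivable s Hs) as [DG DT].
  apply Derive_correct in DG, DT.
  set (g' := Derive G s) in *. set (t' := Derive T s) in *.
  pose proof (GT_norm_pos s Hs) as Hq. destruct (GT_norm_sqr s Hs) as [Hw Hww].
  assert (Dw : is_derive w s ((2 * g' * G s + 2 * t' * T s) / (2 * w s))).
  { apply (is_derive_sqrt (fun t => G t ^ 2 + T t ^ 2)); [|exact Hq].
    pose proof (is_derive_Rplus _ _ _ _ _ (is_derive_pow G 2 s _ DG) (is_derive_pow T 2 s _ DT)) as D.
    revert D. apply is_derive_eq_val. simpl. ring. }
  assert (Hw0 : w s <> 0) by exact (Rgt_not_eq _ _ Hw).
  assert (Hq0 : G s ^ 2 + T s ^ 2 <> 0) by exact (Rgt_not_eq _ _ Hq).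
  unfold sigma. rewrite Rpower_3_2 by exact Hq.
  change (sqrt (G s ^ 2 + T s ^ 2)) with (w s). fold g' t'.
  split.
  - pose proof (is_derive_div T w s _ _ DT Dw Hw0) as D. revert D.
    apply is_derive_eq_val.
    transitivity ((t' * (w s * w s) - T s * (g' * G s + t' * T s)) / (w s * w s * w s));
      [field; exact Hw0|].
    rewrite Hww. field. split; assumption.
  - pose proof (is_derive_div G w s _ _ DG Dw Hw0) as D. revert D.
    apply is_derive_eq_val.
    transitivity ((g' * (w s * w s) - G s * (g' * G s + t' * T s)) / (w s * w s * w s));
      [field; exact Hw0|].
    rewrite Hww. field. split; assumption.
Qed.

Lemma axis_coords_K0 K : a < b -> (forall s, inI a b s -> K s = 0) ->
  ((exists X V c, axis_coords a b G K T X V c) <-> const_on a b sigma).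
Proof.
  intros Hab HK0. split.
  - intros (X & V & c & (s0 & Hs0 & Hn) & H).
    assert (Hpar : forall s, inI a b s -> V s * u s = X s * z s).
    { intros s Hs. destruct (H s Hs) as (E & _). destruct (GT_norm_sqr s Hs) as [Hw _].
      apply (Rmult_eq_reg_l (w s)); [|exact (Rgt_not_eq _ _ Hw)].
      unfold u, z. field_simplify; [|exact (Rgt_not_eq _ _ Hw)..]. lra. }
    set (lam := fun t => X t * u t + V t * z t).
    assert (Hlam : forall s, inI a b s -> lam s = lam s0).
    { intros s Hs. apply (eq_on_of_is_derive0 a b lam); [|exact Hs|exact Hs0].
      intros t Ht. destruct (H t Ht) as (E & DX & DV).
      destruct (normalized_pair_derive t Ht) as (Du & Dz).
      pose proof (is_derive_Rplus _ _ _ _ _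
        (is_derive_Rmult _ _ _ _ _ DX Du) (is_derive_Rmult _ _ _ _ _ DV Dz)) as D.
      revert D. apply is_derive_eq_val. rewrite HK0 by exact Ht.
      transitivity (c * (G t * u t - T t * z t) + sigma t * (G t * X t - T t * V t)); [ring|].
      rewrite E, normalized_pair_cross by exact Ht. ring. }
    set (l0 := lam s0).
    (* (X, V) is parallel to the unit vector (u, z), hence equal to lam (u, z) *)
    assert (HXV : forall s, inI a b s -> X s = l0 * u s /\ V s = l0 * z s).
    { intros s Hs. unfold l0. rewrite <- (Hlam s Hs). unfold lam.
      pose proof (normalized_pair_unit s Hs) as N. pose proof (Hpar s Hs) as P.
      split.
      - transitivity (X s * (u s ^ 2 + z s ^ 2) + z s * (V s * u s - X s * z s));
          [rewrite N, P; ring | ring].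
      - transitivity (V s * (u s ^ 2 + z s ^ 2) + u s * (X s * z s - V s * u s));
          [rewrite N, P; ring | ring]. }
    assert (Hc : forall s, inI a b s -> c = l0 * sigma s).
    { intros s Hs. destruct (H s Hs) as (_ & DX & DV).
      destruct (normalized_pair_derive s Hs) as (Du & Dz).
      rewrite HK0 in DX, DV by exact Hs.
      assert (EX := is_derive_unique_on a b X (fun t => l0 * u t) s _ _
                      (fun t Ht => proj1 (HXV t Ht)) Hs DX (is_derive_scal _ _ l0 _ Du)).
      assert (EV := is_derive_unique_on a b V (fun t => l0 * z t) s _ _
                      (fun t Ht => proj2 (HXV t Ht)) Hs DV (is_derive_scal _ _ l0 _ Dz)).
      destruct (GT_neq0 s Hs) as [HG|HT].
      - apply (Rmult_eq_reg_l (G s)); [lra | exact HG].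
      - apply (Rmult_eq_reg_l (T s)); [lra | exact HT]. }
    assert (Hl0 : l0 <> 0).
    { intros E. destruct (HXV s0 Hs0) as [E1 E2]. pose proof (Hc s0 Hs0) as E3.
      rewrite E in E1, E2, E3. rewrite E1, E2, E3 in Hn. lra. }
    exists (c / l0). intros s Hs. rewrite (Hc s Hs). field. exact Hl0.
  - intros (k & Hk). exists u, z, k. split.
    + set (s0 := (a + b) / 2). assert (Hs0 : inI a b s0) by (unfold inI, s0; lra).
      exists s0. split; [exact Hs0|].
      pose proof (normalized_pair_unit s0 Hs0). pose proof (pow2_ge_0 k). lra.
    + intros s Hs. destruct (normalized_pair_derive s Hs) as (Du & Dz).
      rewrite (Hk s Hs) in Du, Dz. rewrite HK0 by exact Hs.
      split; [exact (normalized_pair_cross s Hs)|split].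
      * revert Du. apply is_derive_eq_val. ring.
      * revert Dz. apply is_derive_eq_val. ring.
Qed.

End NormalizedPair.

Theorem corollary19 (a b : R) (C xi mu v : R -> vec) (G K T : R -> R) :
  a < b ->
  myller_config a b C xi mu v G K T ->
  (forall s, inI a b s -> G s <> 0 \/ T s <> 0) ->
  ((forall s, inI a b s -> K s = 0) ->
     (mu_helix a b mu <->
      const_on a b (fun s => (Derive T s * G s - T s * Derive G s)
                              / Rpower (G s ^ 2 + T s ^ 2) (3 / 2)))) /\
  ((forall s, inI a b s -> G s = 0) ->
     (mu_helix a b mu <-> const_on a b (fun s => K s / T s))) /\
  ((forall s, inI a b s -> T s = 0) ->
     (mu_helix a b mu <-> const_on a b (fun s => K s / G s))).
Proof.
  intros Hab HM HGT.
  rewrite (mu_helix_iff_axis_coords a b C xi mu v G K T HM Hab).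
  split; [|split]; intros Hdeg.
  - exact (axis_coords_K0 a b G T (myller_GT_derivable a b C xi mu v G K T HM) HGT
             K Hab Hdeg).
  - apply axis_coords_G0; [exact Hab | exact Hdeg |].
    intros s Hs. destruct (HGT s Hs) as [HG|HT]; [contradiction (HG (Hdeg s Hs)) | exact HT].
  - apply axis_coords_T0; [exact Hab | exact Hdeg |].
    intros s Hs. destruct (HGT s Hs) as [HG|HT]; [exact HG | contradiction (HT (Hdeg s Hs))].
Qed.
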